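(* In the setting of the context, let $a,b\in X$ and $c\in C$ be such that some geodesic from $a$ to $b$ does not intersect $B_{R+2\delta}(c)$. Then $d_c(a,b)\le 4\delta$.
   Context: $X$ is a $\delta$-hyperbolic geodesic metric space ($\delta>0$, every geodesic triangle $\delta$-thin). $G$ acts on $X$ by isometries and $\mathcal{C}=(C,\{G_c\})$ is a $\rho$-separated fairly rotating family with $\rho\ge20\delta$ (i.e. $C\subseteq X$ is $G$-invariant, $G_c$ fixes $c$, $G_{gc}=gG_cg^{-1}$, distinct points of $C$ are at distance $\ge\rho$, and for $c\in C$, $g\in G_c\setminus\{1\}$, $x\in C\setminus\{c\}$ some geodesic from $x$ to $gx$ meets the closed $1$-ball about $c$). Fix $2+2\delta\le R\le\frac\rho2-3\delta$; $B_r(p)$ denotes the open ball. For $p\in C$, $S_p=\{x:d(x,p)=R\}$ with metric $d_{S_p}(x,y)=$ infimum of lengths of paths from $x$ to $y$ in $X\setminus B_R(p)$ (possibly $\infty$). For $x$ with $d(x,p)\ge R$, $\pi_p(x)\subseteq S_p$ is the set of points where geodesics $[p,x]$ meet $S_p$ (equivalently nearest-point projections of $x$ to $S_p$), and $d_p(x,y)=\operatorname{diam}_{S_p}(\pi_p(x)\cup\pi_p(y))$. *)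

From mathcomp Require Import all_boot all_order all_algebra.
From mathcomp Require Import all_classical all_reals ereal.
Set Implicit Arguments. Unset Strict Implicit. Unset Printing Implicit Defensive.
Import Order.TTheory GRing.Theory Num.Theory.
Local Open Scope classical_set_scope.
Local Open Scope ring_scope.

Section Defs.
Variables (R : realType) (X : Type) (d : X -> X -> R).

Definition is_metric : Prop :=
  [/\ forall x y, d x y = 0 <-> x = y,
      forall x y, d x y = d y x &
      forall x y z, d x z <= d x y + d y z].

Definition geodesic (x y : X) (gam : R -> X) : Prop :=
  [/\ gam 0 = x, gam (d x y) = y &
      forall s t, 0 <= s <= d x y -> 0 <= t <= d x y ->
        d (gam s) (gam t) = `|s - t| ].

Definition geod_image (x y : X) (gam : R -> X) : set X :=
  [set gam t | t in [set t : R | 0 <= t <= d x y]].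

Definition geodesic_space : Prop :=
  forall x y, exists gam, geodesic x y gam.

Definition delta_hyperbolic (delta : R) : Prop :=
  forall x y z g1 g2 g3, geodesic x y g1 -> geodesic y z g2 -> geodesic z x g3 ->
    forall p, geod_image x y g1 p ->
      exists2 q, (geod_image y z g2 `|` geod_image z x g3) q & d p q <= delta.

Definition path_from (x y : X) (f : R -> X) : Prop :=
  [/\ f 0 = x, f 1 = y &
      forall t, 0 <= t <= 1 -> forall eps, 0 < eps -> exists2 eta, 0 < eta &
        forall s, 0 <= s <= 1 -> `|s - t| < eta -> d (f s) (f t) < eps].

Definition path_length (f : R -> X) : \bar R :=
  ereal_sup [set v | exists n (t : nat -> R),
     [/\ t 0%N = 0, t n = 1, (forall i, (i < n)%N -> t i <= t i.+1) &
        v = ((\sum_(i < n) d (f (t i)) (f (t i.+1)))%:E)]].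

Definition ball_open (p : X) (r : R) : set X := [set x | d p x < r].

Definition sphere (p : X) (r : R) : set X := [set x | d x p = r].

(** d_{S_p}: infimum of lengths of paths in X \ B_r(p) (possibly +oo) *)
Definition dS (p : X) (r : R) (x y : X) : \bar R :=
  ereal_inf [set path_length f | f in
    [set f | path_from x y f /\ forall t, 0 <= t <= 1 -> ~ ball_open p r (f t)]].

Definition diamS (p : X) (r : R) (A : set X) : \bar R :=
  ereal_sup [set v | exists x y, [/\ A x, A y & v = dS p r x y]].

(** pi_p(x): points where geodesics [p,x] meet S_p (a geodesic from p
    to x is at distance t from p at time t, so it meets S_p at time r) *)
Definition proj (p : X) (r : R) (x : X) : set X :=
  [set z | exists2 gam, geodesic p x gam & z = gam r].

Definition dproj (p : X) (r : R) (x y : X) : \bar R :=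
  diamS p r (proj p r x `|` proj p r y).

End Defs.

Definition group_action_isom (R : realType) (X G : Type) (d : X -> X -> R)
  (mul : G -> G -> G) (inv : G -> G) (one : G) (act : G -> X -> X) : Prop :=
  (forall g h k, mul g (mul h k) = mul (mul g h) k) /\
  (forall g, mul one g = g /\ mul g one = g) /\
  (forall g, mul (inv g) g = one /\ mul g (inv g) = one) /\
  (forall x, act one x = x) /\
  (forall g h x, act (mul g h) x = act g (act h x)) /\
  (forall g x y, d (act g x) (act g y) = d x y).

Definition fairly_rotating_family (R : realType) (X G : Type) (d : X -> X -> R)
  (mul : G -> G -> G) (inv : G -> G) (one : G) (act : G -> X -> X)
  (C : set X) (Gc : X -> set G) (rho : R) : Prop :=
  (forall g c, C c -> C (act g c)) /\
  (forall c, C c -> Gc c one /\ (forall g h, Gc c g -> Gc c h -> Gc c (mul g h))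
                     /\ (forall g, Gc c g -> Gc c (inv g))) /\
  (forall c g, C c -> Gc c g -> act g c = c) /\
  (forall c g, C c -> Gc (act g c) = [set mul (mul g h) (inv g) | h in Gc c]) /\
  (forall c c', C c -> C c' -> c <> c' -> rho <= d c c') /\
  (forall c g x, C c -> Gc c g -> g <> one -> C x -> x <> c ->
     exists2 gam, geodesic d x (act g x) gam &
       exists2 t, 0 <= t <= d x (act g x) & d (gam t) c <= 1).

(* Every point of π_c(a) ∪ π_c(b) is γ(r) for a geodesic γ from c to a or b,
   and a, b are joined by a geodesic h avoiding B_{r+2δ}(c) (the given one,
   its reverse, or a constant one).  So it suffices to show (lemma
   [sphere_points_close]): for geodesics g1 : c -> p, g2 : c -> q and a
   geodesic h : p -> q avoiding B_{r+2δ}(c), the points g1(r), g2(r) of the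
   sphere S_c are at d_{S_c}-distance at most 4δ.  By thinness of the
   triangle (c,p,q), every point of g1 strictly inside B_{r+δ}(c) is δ-close
   to g2 (it is too near c to be δ-close to h); by compactness the point
   x1 = g1(r+δ) then has a point g2(t0) at distance <= δ, with
   r <= t0 <= r+2δ.  The path g1|[r,r+δ], then [x1, g2(t0)], then g2|[r,t0]
   backwards has length <= 4δ and stays outside B_r(c). *)

From mathcomp Require Import all_boot all_order all_algebra.
From mathcomp Require Import all_classical all_reals ereal.
From mathcomp Require Import topology normedtype derive.
From mathcomp Require Import lra.
Import Order.TTheory GRing.Theory Num.Theory.
Import numFieldNormedType.Exports.
Local Open Scope classical_set_scope.
Local Open Scope ring_scope.
Set Implicit Arguments. Unset Strict Implicit.

Section LipschitzPaths.
Variables (R : realType) (X : Type) (d : X -> X -> R).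
Hypothesis met : is_metric d.

Lemma dist_ge0 x y : 0 <= d x y.
Proof.
have [d0 dsym dtri] := met; have := dtri x y x.
by rewrite (dsym y x) (iffRL (d0 x x) erefl); lra.
Qed.

Definition lipschitz1 (F : R -> X) (A : R) : Prop :=
  forall s t, 0 <= s <= A -> 0 <= t <= A -> d (F s) (F t) <= `|s - t|.

Definition concat (F1 : R -> X) (A : R) (F2 : R -> X) : R -> X :=
  fun s => if s <= A then F1 s else F2 (s - A).

Lemma concat_start (F1 F2 : R -> X) A : 0 <= A -> concat F1 A F2 0 = F1 0.
Proof. by move=> A0; rewrite /concat A0. Qed.

Lemma concat_end (F1 F2 : R -> X) A B :
  0 <= B -> F1 A = F2 0 -> concat F1 A F2 (A + B) = F2 B.
Proof.
move=> B0 E; rewrite /concat; case: leP => h; last by congr F2; lra.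
have -> : B = 0 by lra.
by rewrite addr0.
Qed.

Lemma concat_invariant (P : X -> Prop) (F1 F2 : R -> X) A B :
  (forall s, 0 <= s <= A -> P (F1 s)) -> (forall s, 0 <= s <= B -> P (F2 s)) ->
  forall s, 0 <= s <= A + B -> P (concat F1 A F2 s).
Proof.
move=> H1 H2 s /andP[s0 s1]; rewrite /concat; case: leP => h.
  by apply: H1; rewrite s0 h.
by apply: H2; apply/andP; split; lra.
Qed.

(* Concatenating two 1-Lipschitz paths with matching endpoints gives one;
   across the junction we pass through the common point F1 A = F2 0. *)
Lemma concat_lipschitz1 (F1 F2 : R -> X) A B :
  0 <= A -> 0 <= B -> lipschitz1 F1 A -> lipschitz1 F2 B -> F1 A = F2 0 ->
  lipschitz1 (concat F1 A F2) (A + B).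
Proof.
have [_ dsym dtri] := met.
move=> A0 B0 L1 L2 E s t.
wlog st : s t / s <= t.
  move=> W hs ht; case: (leP s t) => [st|/ltW ts]; first exact: W.
  by rewrite dsym distrC; apply: W.
move=> /andP[s0 sAB] /andP[t0 tAB]; rewrite /concat.
case: (leP s A) => sA; case: (leP t A) => tA.
- by apply: L1; rewrite ?s0 ?t0.
- have h1 : d (F1 s) (F1 A) <= A - s.
    have := L1 s A; rewrite distrC ger0_norm ?subr_ge0 // s0 sA A0 lexx.
    exact.
  have h2 : d (F2 0) (F2 (t - A)) <= t - A.
    have := L2 0 (t - A); rewrite lexx B0 sub0r normrN ger0_norm; last lra.
    by apply; apply/andP; split; lra.
  have := dtri (F1 s) (F1 A) (F2 (t - A)); rewrite -E in h2.
  by rewrite ler0_norm; lra.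
- lra.
- rewrite (_ : s - t = (s - A) - (t - A)); last by lra.
  by apply: L2; apply/andP; split; lra.
Qed.

(* A path on [0,1] that is K-Lipschitz has length at most K: each partition
   sum is bounded by the telescoping sum K * (t n - t 0). *)
Lemma path_length_lipschitz (f : R -> X) (K : R) :
  (forall s u, 0 <= s <= 1 -> 0 <= u <= 1 -> d (f s) (f u) <= K * `|s - u|) ->
  (path_length d f <= K%:E)%E.
Proof.
move=> L; apply: ge_ereal_sup => _ [n [t [t0 tn M ->]]]; rewrite lee_fin.
have mono : {in [pred i | (i <= n)%N] &, {homo t : i j / (i <= j)%N >-> i <= j}}.
  apply: homo_leq_in => [x|y x z|i j|i]; rewrite ?inE.
  - exact: lexx.
  - exact: le_trans.
  - by move=> _ jn k /andP[_ /ltnW kj]; rewrite inE (leq_trans kj jn).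
  - by move=> _ /M.
have inI i : (i <= n)%N -> 0 <= t i <= 1.
  move=> ilen; rewrite -t0 -tn !mono ?inE //.
apply: (@le_trans _ _ (\sum_(i < n) K * (t i.+1 - t i))).
  apply: ler_sum => i _; have Mi := M i (ltn_ord i).
  rewrite -(ger0_norm (x := t i.+1 - t i)) ?subr_ge0 // distrC.
  by apply: L; apply: inI => //; apply: ltnW.
rewrite -mulr_sumr -(big_mkord xpredT (fun i => t i.+1 - t i)).
by rewrite telescope_sumr // tn t0 subr0 mulr1.
Qed.

(* A 1-Lipschitz path on [0, T] that stays outside B_r(c) witnesses
   d_{S_c}(F 0, F T) <= T (rescale it to [0,1]). *)
Lemma dS_le_lipschitz1 (c : X) (r : R) (F : R -> X) (T : R) :
  0 < T -> lipschitz1 F T -> (forall s, 0 <= s <= T -> r <= d c (F s)) ->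
  (dS d c r (F 0%R) (F T) <= T%:E)%E.
Proof.
move=> T0 L away; pose f s := F (T * s).
have inT s : 0 <= s <= 1 -> 0 <= T * s <= T.
  by move=> /andP[s0 s1]; apply/andP; split; nra.
have Lf s u : 0 <= s <= 1 -> 0 <= u <= 1 -> d (f s) (f u) <= T * `|s - u|.
  move=> hs hu; apply: le_trans (L _ _ (inT _ hs) (inT _ hu)) _.
  by rewrite -mulrBr normrM gtr0_norm.
apply: le_trans (path_length_lipschitz Lf).
apply: ereal_inf_lbound; exists f => //; split; last first.
  by move=> s hs; apply/negP; rewrite -leNgt; exact: away (inT _ hs).
split; [by rewrite /f mulr0 | by rewrite /f mulr1 |].
move=> s hs e e0; exists (e / T); first by rewrite divr_gt0.
move=> u hu us; apply: le_lt_trans (Lf _ _ hu hs) _.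
by rewrite mulrC -ltr_pdivlMr.
Qed.

End LipschitzPaths.

Section Geodesics.
Variables (R : realType) (X : Type) (d : X -> X -> R).
Hypothesis met : is_metric d.

Lemma geodesic_dist_start x y g t :
  geodesic d x y g -> 0 <= t <= d x y -> d x (g t) = t.
Proof.
move=> [g0 _ gi] /andP[t0 t1]; rewrite -{1}g0 gi ?lexx ?t0 ?t1 //=.
  by rewrite sub0r normrN ger0_norm.
exact: le_trans t1.
Qed.

Lemma geodesic_rev x y g : geodesic d x y g -> geodesic d y x (fun t => g (d x y - t)).
Proof.
have [_ dsym _] := met; move=> [g0 gD gi]; split.
- by rewrite subr0.
- by rewrite dsym subrr.
- rewrite (dsym y x) => s t /andP[s0 s1] /andP[t0 t1].
  rewrite gi; first by rewrite distrC; congr (`| _ |); lra.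
  all: by apply/andP; split; lra.
Qed.

Lemma geodesic_const x : geodesic d x x (fun _ => x).
Proof.
have [d0 _ _] := met; have dxx : d x x = 0 by apply/d0.
split => // s t; rewrite dxx => /andP[s0 s1] /andP[t0 t1].
have -> : s = t by lra.
by rewrite subrr normr0 -dxx.
Qed.

Lemma geodesic_lipschitz1 x y g : geodesic d x y g -> lipschitz1 d g (d x y).
Proof. by move=> [_ _ gi] s t hs ht; rewrite gi. Qed.

Lemma geodesic_forward_lipschitz1 x y g a A :
  geodesic d x y g -> 0 <= a -> a + A <= d x y -> lipschitz1 d (fun s => g (a + s)) A.
Proof.
move=> [_ _ gi] a0 aA s t /andP[? ?] /andP[? ?].
rewrite gi; first by rewrite opprD addrACA subrr add0r.
all: by apply/andP; split; lra.
Qed.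

Lemma geodesic_backward_lipschitz1 x y g b A :
  geodesic d x y g -> 0 <= b - A -> b <= d x y -> lipschitz1 d (fun s => g (b - s)) A.
Proof.
move=> [_ _ gi] bA b1 s t /andP[? ?] /andP[? ?].
rewrite gi; first by rewrite (_ : b - s - (b - t) = - (s - t)) ?normrN //; lra.
all: by apply/andP; split; lra.
Qed.

End Geodesics.

(* Clamping to [0, D] is 1-Lipschitz; it extends maps defined on [0, D]. *)
Definition clamp (R : realType) (D t : R) : R :=
  if t <= 0 then 0 else if t <= D then t else D.

Lemma clamp_in (R : realType) (D t : R) : 0 <= D -> 0 <= clamp D t <= D.
Proof.
by move=> D0; rewrite /clamp; case: (leP t 0) => h1; [|case: (leP t D) => h2];
  apply/andP; split; lra.
Qed.

Lemma clamp_id (R : realType) (D t : R) : 0 <= t <= D -> clamp D t = t.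
Proof. by move=> /andP[h1 h2]; rewrite /clamp; case: (leP t 0) => h3; [lra|rewrite h2]. Qed.

Lemma clamp_lipschitz1 (R : realType) (D s t : R) :
  0 <= D -> `|clamp D s - clamp D t| <= `|s - t|.
Proof.
move=> D0.
wlog st : s t / s <= t.
  move=> H; case: (leP s t) => [|/ltW] h; first exact: H.
  by rewrite distrC (distrC s); apply: H.
rewrite distrC (distrC s).
suff /andP[h1 h2] : 0 <= clamp D t - clamp D s <= t - s by rewrite !ger0_norm //; lra.
rewrite /clamp; case: (leP s 0) => h1; case: (leP t 0) => h2;
  case: (leP s D) => h3; case: (leP t D) => h4; apply/andP; split; lra.
Qed.

Lemma lipschitz1_continuous (R : realType) (f : R -> R) :
  (forall s t, `|f s - f t| <= `|s - t|) -> continuous f.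
Proof.
move=> L x; apply/cvgrPdist_lt => e e0; near=> y.
apply: le_lt_trans (L _ _) _; near: y.
by apply: (@cvgr_dist_lt _ _ _ _ _ id) => //; exact: cvg_id.
Unshelve. all: by end_near.
Qed.

(* Every point has a closest point on a geodesic segment (compactness). *)
Lemma closest_point_on_geodesic (R : realType) (X : Type) (d : X -> X -> R) x c q g :
  is_metric d -> geodesic d c q g ->
  exists2 t0, 0 <= t0 <= d c q &
    forall t, 0 <= t <= d c q -> d x (g t0) <= d x (g t).
Proof.
move=> met geo; have D0 := dist_ge0 met c q.
have [_ dsym dtri] := met; have [_ _ gi] := geo.
pose f t := d x (g (clamp (d c q) t)).
have cf : continuous f.
  apply: lipschitz1_continuous => s t; apply: le_trans (clamp_lipschitz1 s t D0).
  rewrite /f -(gi _ _ (clamp_in _ D0) (clamp_in _ D0)); set u := g _; set v := g _.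
  have := dtri x v u; have := dtri x u v; rewrite (dsym v u) ler_norml; lra.
have [t0] := EVT_min D0 (continuous_subspaceT (A := `[0, d c q]) cf).
rewrite in_itv /= => ht0 H; exists t0 => // t ht.
by have := H t; rewrite in_itv /= => /(_ ht); rewrite /f !clamp_id.
Qed.

Section ThinTriangle.
Variables (R : realType) (X : Type) (d : X -> X -> R) (delta r : R).
Hypotheses (met : is_metric d) (hyp : delta_hyperbolic d delta).
Variables (c p q : X) (g1 g2 h : R -> X).
Hypotheses (G1 : geodesic d c p g1) (G2 : geodesic d c q g2) (H : geodesic d p q h).
Hypothesis far : forall t, 0 <= t <= d p q -> r + 2 * delta <= d c (h t).

Lemma far_start : r + 2 * delta <= d c p.
Proof.
have [h0 _ _] := H; rewrite -h0; apply: far.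
by rewrite lexx dist_ge0.
Qed.

(* A point of [c, p] at distance u < r + δ from c is δ-close to [c, q]:
   by thinness it is δ-close to [p, q] or to [c, q], and [p, q] is too far. *)
Lemma inner_point_near_other_side u :
  0 <= u <= d c p -> u < r + delta ->
  exists2 t, 0 <= t <= d c q & d (g1 u) (g2 t) <= delta.
Proof.
move=> hu ur; have [_ dsym dtri] := met.
have [w Hw dw] := hyp G1 H (geodesic_rev met G2) (ex_intro2 _ _ u hu erefl).
have dcu : d c (g1 u) = u by apply: geodesic_dist_start G1 hu.
case: Hw => [[t ht <-]|[t ht <-]] in dw *.
  by have := far ht; have := dtri c (g1 u) (h t); lra.
rewrite (dsym q c) in ht; exists (d c q - t) => //.
by case/andP: ht => ? ?; apply/andP; split; lra.
Qed.

Hypothesis gs : geodesic_space d.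

(* The point x1 = g1(r+δ) has a point of [c, q] within δ: take a closest
   point and compare with the points given above for u close to r + δ. *)
Lemma shifted_point_near_other_side : 0 < delta -> 0 <= r ->
  exists2 t0, 0 <= t0 <= d c q & d (g1 (r + delta)) (g2 t0) <= delta.
Proof.
move=> dpos r0; have [[_ _ dtri] Dp] := (met, far_start).
have [_ _ g1i] := G1.
have [t0 ht0 tmin] := closest_point_on_geodesic (g1 (r + delta)) met G2.
exists t0 => //; apply/ler_addgt0Pr => e e0.
have [m m0 [me md]] : exists2 m : R, 0 < m & m <= e /\ m < delta.
  set m := Num.min e delta.
  have me : m <= e by rewrite /m ge_min lexx.
  have md : m <= delta by rewrite /m ge_min lexx orbT.
  have m0 : 0 < m by rewrite /m lt_min e0 dpos.
  by exists (m / 2); [|split]; lra.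
pose u := r + delta - m.
have hu : 0 <= u <= d c p by apply/andP; split; rewrite /u; lra.
have ur : u < r + delta by rewrite /u; lra.
have [t ht dt] := inner_point_near_other_side hu ur.
have dx : d (g1 (r + delta)) (g1 u) <= e.
  rewrite g1i ?hu //; last by apply/andP; split; lra.
  by rewrite /u ger0_norm; lra.
apply: le_trans (tmin _ ht) _.
by have := dtri (g1 (r + delta)) (g1 u) (g2 t); lra.
Qed.

(* The detour g1|[r, r+δ], [x1, g2 t0], g2|[r, t0] reversed stays outside
   B_r(c) and has length <= 4δ. *)
Lemma sphere_points_close : 0 < delta -> 0 <= r -> (dS d c r (g1 r) (g2 r) <= (4 * delta)%:E)%E.
Proof.
move=> dpos r0; have [[_ dsym dtri] Dp] := (met, far_start).
have [t0 ht0 Ld] := shifted_point_near_other_side dpos r0.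
set x1 := g1 (r + delta) in Ld; set L := d x1 (g2 t0) in Ld.
have L0 : 0 <= L := dist_ge0 met _ _.
have dcx1 : d c x1 = r + delta.
  by rewrite /x1 (geodesic_dist_start G1) //; apply/andP; split; lra.
have dct0 : d c (g2 t0) = t0 by rewrite (geodesic_dist_start G2).
have t0lo : r <= t0 by have := dtri c (g2 t0) x1; rewrite (dsym (g2 t0) x1) -/L; lra.
have t0hi : t0 <= r + 2 * delta by have := dtri c x1 (g2 t0); rewrite -/L; lra.
have [k K] := gs x1 (g2 t0).
pose P1 s := g1 (r + s); pose P3 s := g2 (t0 - s).
pose F1 := concat P1 delta k; pose F := concat F1 (delta + L) P3.
have [k0 kL _] := K.
have J1 : P1 delta = k 0 := esym k0.
have J2 : F1 (delta + L) = P3 0 by rewrite /F1 (concat_end _ J1) // kL /P3 subr0.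
have lipF : lipschitz1 d F (delta + L + (t0 - r)).
  apply: concat_lipschitz1 => //; try lra.
    apply: concat_lipschitz1 => //; try lra.
      by apply: geodesic_forward_lipschitz1 G1 _ _; lra.
    exact: geodesic_lipschitz1 K.
  by apply: geodesic_backward_lipschitz1 G2 _ _; case/andP: ht0; lra.
have away : forall s, 0 <= s <= delta + L + (t0 - r) -> r <= d c (F s).
  pose P x := r <= d c x.
  apply: (concat_invariant (P := P)); [apply: (concat_invariant (P := P))|];
    move=> s /andP[? ?]; rewrite /P.
  - by rewrite /P1 (geodesic_dist_start G1); [lra | apply/andP; split; lra].
  - have := geodesic_dist_start K (ltac:(apply/andP; split; lra) : 0 <= s <= L).
    by have := dtri c (k s) x1; rewrite (dsym (k s) x1); lra.
  - by rewrite /P3 (geodesic_dist_start G2); [lra | case/andP: ht0; lra].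
have F0 : F 0 = g1 r.
  rewrite /F concat_start; last lra.
  by rewrite /F1 concat_start /P1 ?addr0 //; lra.
have FT : F (delta + L + (t0 - r)) = g2 r.
  rewrite /F concat_end //; last lra.
  by rewrite /P3; congr g2; lra.
have := dS_le_lipschitz1 (ltac:(lra) : 0 < delta + L + (t0 - r)) lipF away.
by rewrite F0 FT => /le_trans; apply; rewrite lee_fin; lra.
Qed.

End ThinTriangle.

Lemma far_geodesic_between (R : realType) (X : Type) (d : X -> X -> R) (rho : R)
    (a b c : X) (gam : R -> X) :
  is_metric d -> geodesic d a b gam ->
  (forall t, 0 <= t <= d a b -> rho <= d c (gam t)) ->
  forall e1 e2, e1 = a \/ e1 = b -> e2 = a \/ e2 = b ->
  exists2 h, geodesic d e1 e2 h & forall t, 0 <= t <= d e1 e2 -> rho <= d c (h t).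
Proof.
move=> met Gm far; have [_ dsym _] := met; have [gm0 gmD _] := Gm.
have ab0 := dist_ge0 met a b.
have [fa fb] : rho <= d c a /\ rho <= d c b.
  by split; [rewrite -{1}gm0 | rewrite -{1}gmD]; apply: far; rewrite lexx ab0.
move=> e1 e2 [->|->] [->|->].
- by exists (fun=> a) => //; exact: geodesic_const.
- by exists gam.
- exists (fun t => gam (d a b - t)); first exact: geodesic_rev.
  by rewrite dsym => t /andP[t0 t1]; apply: far; apply/andP; split; lra.
- by exists (fun=> b) => //; exact: geodesic_const.
Qed.

Theorem lemma3p4 (R : realType) (X G : Type) (d : X -> X -> R)
  (delta : R) (mul : G -> G -> G) (inv : G -> G) (one : G) (act : G -> X -> X)
  (C : set X) (Gc : X -> set G) (rho r : R) :
  is_metric d -> geodesic_space d -> 0 < delta -> delta_hyperbolic d delta ->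
  group_action_isom d mul inv one act ->
  fairly_rotating_family d mul inv one act C Gc rho ->
  20 * delta <= rho ->
  2 + 2 * delta <= r -> r <= rho / 2 - 3 * delta ->
  forall (a b c : X), C c ->
  (exists2 gam, geodesic d a b gam &
     forall t, 0 <= t <= d a b -> ~ ball_open d c (r + 2 * delta) (gam t)) ->
  (dproj d c r a b <= (4 * delta)%:E)%E.
Proof.
move=> met gs dpos hyp _ _ _ r_ge _ a b c _ [gam Gm avoid].
have r0 : 0 <= r by lra.
have far t : 0 <= t <= d a b -> r + 2 * delta <= d c (gam t).
  by move=> /avoid /negP; rewrite -leNgt.
have on_sphere z : (proj d c r a `|` proj d c r b) z ->
    exists e, (e = a \/ e = b) /\ exists2 g, geodesic d c e g & z = g r.
  by case=> -[g Gg ->]; [exists a | exists b]; split; [left | exists g | right | exists g].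
rewrite /dproj /diamS; apply: ge_ereal_sup => _ [x [y [/on_sphere Hx /on_sphere Hy ->]]].
have [e1 [E1 [g1 G1 ->]]] := Hx; have [e2 [E2 [g2 G2 ->]]] := Hy.
have [h H farh] := far_geodesic_between met Gm far E1 E2.
exact: (sphere_points_close met hyp G1 G2 H farh gs dpos r0).
Qed.
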